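(* Let $\mathcal U=(V,\tilde V,W,\tilde W,R)$ be an ordered gradient space, let $\psi_1,\psi_2\in B_+$, and set $\Omega'(\psi_1,\psi_2)=\{v\in V:0\le v\le\psi_1\text{ and }v\le\psi_2\}$. Then there exists a unique $u\in\Omega'(\psi_1,\psi_2)$ such that $\|\max(\psi_1,\psi_2)-u\|_V=\inf_{v\in\Omega'(\psi_1,\psi_2)}\|\max(\psi_1,\psi_2)-v\|_V$.
   Context: A gradient space $\mathcal U=(V,\tilde V,W,\tilde W,R)$ consists of vector spaces $\tilde V,\tilde W$ over $\mathbf R$ or $\mathbf C$, a relation $R\subseteq\tilde V\times\tilde W$ closed under addition and under multiplication by positive scalars, and linear subspaces $V\subseteq\tilde V$, $W\subseteq\tilde W$ such that $V$ is a reflexive Banach space (norm $\|\cdot\|_V$), $W$ is a reflexive strictly convex Banach space, for every $(u,g)\in R\cap(V\times W)$ there is $g'\in W$ with $(-u,g')\in R$, and $R\cap(V\times W)$ is closed in $V\times W$. A linear preorder on $\tilde V$ is a relation $\le$ with: $a\le a$; $a\le b,\ b\le c\Rightarrow a\le c$; $b\le c\Rightarrow a+b\le a+c$; $a\le b,\ \alpha\in[0,\infty)\Rightarrow\alpha a\le\alpha b$. A preordered gradient space is a gradient space with a linear preorder $\le$ on $\tilde V$ such that if $u_i\in V$, $\psi\in\tilde V$, $u_i\le\psi$ for all $i$ and $u_i\to u$ in $V$, then $u\le\psi$. An ordered gradient space is a preordered gradient space such that $V$ is strictly convex and, for $u,v\in V$, $0\le u\le v$ implies $\|u\|_V\le\|v\|_V$.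 Define $B_+=\{\psi\in\tilde V:0\le\psi\le u\text{ for some }u\in V\}$. For $\psi_1,\psi_2\in B_+$, $\max(\psi_1,\psi_2)$ denotes the unique element $u$ of $\Omega(\psi_1,\psi_2)=\{u\in V:u\ge\psi_1,\ u\ge\psi_2\}$ minimizing $\|u\|_V$ over $\Omega(\psi_1,\psi_2)$ (it exists and is unique). *)

From Stdlib Require Import Reals.
Open Scope R_scope.

Record VecSpace := mkVecSpace {
  vs_car :> Type;
  vs_add : vs_car -> vs_car -> vs_car;
  vs_zero : vs_car;
  vs_opp : vs_car -> vs_car;
  vs_scal : R -> vs_car -> vs_car;
  vs_addA : forall x y z, vs_add x (vs_add y z) = vs_add (vs_add x y) z;
  vs_addC : forall x y, vs_add x y = vs_add y x;
  vs_add0 : forall x, vs_add x vs_zero = x;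
  vs_addN : forall x, vs_add x (vs_opp x) = vs_zero;
  vs_scalA : forall a b x, vs_scal a (vs_scal b x) = vs_scal (a * b) x;
  vs_scal1 : forall x, vs_scal 1 x = x;
  vs_scalDl : forall a b x, vs_scal (a + b) x = vs_add (vs_scal a x) (vs_scal b x);
  vs_scalDr : forall a x y, vs_scal a (vs_add x y) = vs_add (vs_scal a x) (vs_scal a y)
}.

Arguments vs_add {v}.
Arguments vs_zero {v}.
Arguments vs_opp {v}.
Arguments vs_scal {v}.

Definition vs_sub {E : VecSpace} (x y : E) : E := vs_add x (vs_opp y).

Section Normed.
Variable E : VecSpace.
Variable inS : E -> Prop.
Variable n : E -> R.            (* its norm (only meaningful on inS) *)

Definition is_subspace : Prop :=
  inS vs_zero /\
  (forall x y, inS x -> inS y -> inS (vs_add x y)) /\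
  (forall a x, inS x -> inS (vs_scal a x)).

Definition is_norm_on : Prop :=
  (forall x, inS x -> 0 <= n x) /\
  (forall x, inS x -> n x = 0 -> x = vs_zero) /\
  (forall a x, inS x -> n (vs_scal a x) = Rabs a * n x) /\
  (forall x y, inS x -> inS y -> n (vs_add x y) <= n x + n y).

Definition converges (u : nat -> E) (l : E) : Prop :=
  forall eps, 0 < eps -> exists N, forall k, (N <= k)%nat -> n (vs_sub (u k) l) < eps.

Definition cauchy (u : nat -> E) : Prop :=
  forall eps, 0 < eps -> exists N, forall p q, (N <= p)%nat -> (N <= q)%nat ->
    n (vs_sub (u p) (u q)) < eps.

Definition is_banach : Prop :=
  is_subspace /\ is_norm_on /\
  (forall u : nat -> E, (forall k, inS (u k)) -> cauchy u ->
     exists l, inS l /\ converges u l).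

(** bounded linear functionals on the subspace (the dual space);
    two functionals are identified when they agree on the subspace. *)
Definition bounded_linear (f : E -> R) : Prop :=
  (forall x y, inS x -> inS y -> f (vs_add x y) = f x + f y) /\
  (forall a x, inS x -> f (vs_scal a x) = a * f x) /\
  (exists C, forall x, inS x -> Rabs (f x) <= C * n x).

(** bounded linear functionals on the dual (the bidual space),
    the dual carrying the operator norm *)
Definition bidual_elem (Phi : (E -> R) -> R) : Prop :=
  (forall f g, bounded_linear f -> bounded_linear g ->
     (forall x, inS x -> f x = g x) -> Phi f = Phi g) /\
  (forall f g, bounded_linear f -> bounded_linear g ->
     Phi (fun x => f x + g x) = Phi f + Phi g) /\
  (forall a f, bounded_linear f -> Phi (fun x => a * f x) = a * Phi f) /\
  (exists C, forall f M, bounded_linear f -> 0 <= M ->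
     (forall x, inS x -> Rabs (f x) <= M * n x) -> Rabs (Phi f) <= C * M).

Definition is_reflexive : Prop :=
  forall Phi, bidual_elem Phi ->
    exists v, inS v /\ forall f, bounded_linear f -> Phi f = f v.

Definition is_strictly_convex : Prop :=
  forall x y, inS x -> inS y -> n x = 1 -> n y = 1 -> x <> y ->
    n (vs_scal (/ 2) (vs_add x y)) < 1.

End Normed.

Definition gradient_space (Vt Wt : VecSpace)
  (inV : Vt -> Prop) (nV : Vt -> R) (inW : Wt -> Prop) (nW : Wt -> R)
  (Rel : Vt -> Wt -> Prop) : Prop :=
  (forall u g u' g', Rel u g -> Rel u' g' -> Rel (vs_add u u') (vs_add g g')) /\
  (forall a u g, 0 < a -> Rel u g -> Rel (vs_scal a u) (vs_scal a g)) /\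
  is_banach Vt inV nV /\ is_reflexive Vt inV nV /\
  is_banach Wt inW nW /\ is_reflexive Wt inW nW /\ is_strictly_convex Wt inW nW /\
  (forall u g, inV u -> inW g -> Rel u g -> exists g', inW g' /\ Rel (vs_opp u) g') /\
  (forall (uk : nat -> Vt) (gk : nat -> Wt) u g,
     (forall k, inV (uk k) /\ inW (gk k) /\ Rel (uk k) (gk k)) ->
     inV u -> inW g -> converges Vt nV uk u -> converges Wt nW gk g ->
     Rel u g).

Definition linear_preorder (Vt : VecSpace) (le : Vt -> Vt -> Prop) : Prop :=
  (forall a, le a a) /\
  (forall a b c, le a b -> le b c -> le a c) /\
  (forall a b c, le b c -> le (vs_add a b) (vs_add a c)) /\
  (forall a b al, le a b -> 0 <= al -> le (vs_scal al a) (vs_scal al b)).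

Definition preordered_gradient_space (Vt Wt : VecSpace)
  (inV : Vt -> Prop) (nV : Vt -> R) (inW : Wt -> Prop) (nW : Wt -> R)
  (Rel : Vt -> Wt -> Prop) (le : Vt -> Vt -> Prop) : Prop :=
  gradient_space Vt Wt inV nV inW nW Rel /\
  linear_preorder Vt le /\
  (forall (uk : nat -> Vt) u psi,
     (forall k, inV (uk k)) -> (forall k, le (uk k) psi) ->
     inV u -> converges Vt nV uk u -> le u psi).

Definition ordered_gradient_space (Vt Wt : VecSpace)
  (inV : Vt -> Prop) (nV : Vt -> R) (inW : Wt -> Prop) (nW : Wt -> R)
  (Rel : Vt -> Wt -> Prop) (le : Vt -> Vt -> Prop) : Prop :=
  preordered_gradient_space Vt Wt inV nV inW nW Rel le /\
  is_strictly_convex Vt inV nV /\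
  (forall u v, inV u -> inV v -> le vs_zero u -> le u v -> nV u <= nV v).

Definition Bplus (Vt : VecSpace) (inV : Vt -> Prop) (le : Vt -> Vt -> Prop)
  (psi : Vt) : Prop :=
  le vs_zero psi /\ exists u, inV u /\ le psi u.

Definition Omega (Vt : VecSpace) (inV : Vt -> Prop) (le : Vt -> Vt -> Prop)
  (psi1 psi2 u : Vt) : Prop :=
  inV u /\ le psi1 u /\ le psi2 u.

(** m is max(ψ1,ψ2): the (unique) norm minimizer over Ω(ψ1,ψ2) *)
Definition is_max (Vt : VecSpace) (inV : Vt -> Prop) (nV : Vt -> R)
  (le : Vt -> Vt -> Prop) (psi1 psi2 m : Vt) : Prop :=
  Omega Vt inV le psi1 psi2 m /\
  (forall v, Omega Vt inV le psi1 psi2 v -> nV m <= nV v).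

Definition Omega' (Vt : VecSpace) (inV : Vt -> Prop) (le : Vt -> Vt -> Prop)
  (psi1 psi2 v : Vt) : Prop :=
  inV v /\ le vs_zero v /\ le v psi1 /\ le v psi2.

Definition is_inf (A : R -> Prop) (x : R) : Prop :=
  (forall r, A r -> x <= r) /\
  (forall y, (forall r, A r -> y <= r) -> y <= x).

(* The set Omega' (psi1, psi2) contains 0 and is convex and sequentially closed, so the theorem
   is the existence and uniqueness of a nearest point to [m] in a nonempty closed convex subset of
   a reflexive, strictly convex normed space.  Uniqueness: the
   midpoint of two nearest points would be strictly nearer.  Existence: with [d] the infimal
   distance, let [v_j] be a minimizing sequence and [L] a Banach limit; [f |-> L (f (v_j))] lies
   in the bidual, so by reflexivity it is the evaluation at some [v].  Each sublevel set
   [{w | |m - w| <= d + 1/(k+1)}] is closed, convex and contains [v_j] for [j >= k]; if it missed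
   [v], a separating functional [f] (Hahn-Banach, via Zorn's lemma) would give
   [L (f (v_j)) < f v].  Hence [v] is at distance [d] from [m]. *)

From Stdlib Require Import Reals Lra Lia List.
From Stdlib Require Import Classical ClassicalEpsilon FunctionalExtensionality.
From mathcomp Require ssrbool boolp classical_sets.
Open Scope R_scope.

Lemma zorn_preorder (T : Type) (t0 : T) (Rl : T -> T -> Prop) :
  (forall t, Rl t t) -> (forall r s t, Rl r s -> Rl s t -> Rl r t) ->
  (forall A : T -> Prop, (forall x y, A x -> A y -> Rl x y \/ Rl y x) ->
     exists t, forall s, A s -> Rl s t) ->
  exists t, forall s, Rl t s -> Rl s t.
Proof.
intros Hrefl Htrans Hchain.
assert (E : forall x y, Rl x y <-> boolp.asbool (Rl x y) = true).
{ intros x y; split; intro H.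
  - exact (ssrbool.introT (boolp.asboolP _) H).
  - exact (ssrbool.elimT (boolp.asboolP _) H). }
destruct (@classical_sets.ZL_preorder T t0 (fun x y => boolp.asbool (Rl x y))) as [t Ht].
- intro t; apply E; auto.
- intros r s t a b; apply E; apply E in a; apply E in b; eauto.
- intros A tot. destruct (Hchain A) as [t ht].
  + intros x y ax ay. destruct (tot x y ax ay) as [a|a]; [left|right]; apply E; exact a.
  + exists t. intros s As. apply E; auto.
- exists t. intros s hs. apply E, Ht, E, hs.
Qed.

Lemma vs_add_reg_l {E : VecSpace} (a b c : E) : vs_add a b = vs_add a c -> b = c.
Proof.
intro H.
assert (H' : vs_add (vs_opp a) (vs_add a b) = vs_add (vs_opp a) (vs_add a c))
  by (rewrite H; reflexivity).
rewrite !vs_addA, (vs_addC _ (vs_opp a) a), vs_addN, !(vs_addC _ vs_zero), !vs_add0 in H'.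
exact H'.
Qed.

Lemma vs_scal0l {E : VecSpace} (x : E) : vs_scal 0 x = vs_zero.
Proof.
apply (vs_add_reg_l (vs_scal 0 x)). rewrite vs_add0, <- vs_scalDl.
f_equal; ring.
Qed.

Lemma vs_opp_scal {E : VecSpace} (x : E) : vs_opp x = vs_scal (-1) x.
Proof.
apply (vs_add_reg_l x). rewrite vs_addN.
rewrite <- (vs_scal1 _ x) at 1. rewrite <- vs_scalDl.
replace (1 + -1) with 0 by ring. rewrite vs_scal0l; reflexivity.
Qed.

Lemma vs_scal0r {E : VecSpace} (a : R) : vs_scal a (@vs_zero E) = vs_zero.
Proof. rewrite <- (vs_scal0l vs_zero), vs_scalA, Rmult_0_r; reflexivity. Qed.

Lemma vs_addACA {E : VecSpace} (a b c d : E) :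
  vs_add (vs_add a b) (vs_add c d) = vs_add (vs_add a c) (vs_add b d).
Proof.
rewrite <- !vs_addA. f_equal. rewrite !vs_addA. f_equal. apply vs_addC.
Qed.

(* Identities between linear expressions are decided by reflection: an expression over
   the atoms [l] denotes the linear combination of [l] with coefficients [vterm_coef]. *)
Inductive vterm :=
  | VAtom (i : nat) | VZero | VAdd (a b : vterm) | VOpp (a : vterm) | VScal (r : R) (a : vterm).

Fixpoint vterm_eval {E : VecSpace} (l : list E) (e : vterm) : E :=
  match e with
  | VAtom i => nth i l vs_zero
  | VZero => vs_zero
  | VAdd a b => vs_add (vterm_eval l a) (vterm_eval l b)
  | VOpp a => vs_opp (vterm_eval l a)
  | VScal r a => vs_scal r (vterm_eval l a)
  end.

Fixpoint vterm_coef (e : vterm) (i : nat) : R :=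
  match e with
  | VAtom j => if Nat.eqb i j then 1 else 0
  | VZero => 0
  | VAdd a b => vterm_coef a i + vterm_coef b i
  | VOpp a => - vterm_coef a i
  | VScal r a => r * vterm_coef a i
  end.

Fixpoint lincomb {E : VecSpace} (l : list E) (c : nat -> R) (k : nat) : E :=
  match l with
  | nil => vs_zero
  | x :: l' => vs_add (vs_scal (c k) x) (lincomb l' c (S k))
  end.

Lemma lincomb_ext {E : VecSpace} (l : list E) c1 c2 k :
  (forall i, (k <= i)%nat -> c1 i = c2 i) -> lincomb l c1 k = lincomb l c2 k.
Proof.
revert k; induction l; intros k H; simpl; auto.
rewrite H, (IHl (S k)) by (auto; intros i Hi; apply H; lia). reflexivity.
Qed.

Lemma lincomb_add {E : VecSpace} (l : list E) c1 c2 k :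
  lincomb l (fun i => c1 i + c2 i) k = vs_add (lincomb l c1 k) (lincomb l c2 k).
Proof.
revert k; induction l; intro k; simpl.
- rewrite vs_add0; reflexivity.
- rewrite IHl, vs_scalDl, vs_addACA; reflexivity.
Qed.

Lemma lincomb_scal {E : VecSpace} (l : list E) r c k :
  lincomb l (fun i => r * c i) k = vs_scal r (lincomb l c k).
Proof.
revert k; induction l; intro k; simpl.
- rewrite vs_scal0r; reflexivity.
- rewrite IHl, vs_scalDr, vs_scalA; reflexivity.
Qed.

Lemma lincomb0 {E : VecSpace} (l : list E) k : lincomb l (fun _ => 0) k = vs_zero.
Proof.
revert k; induction l; intro k; simpl; auto. rewrite IHl, vs_scal0l, vs_add0; reflexivity.
Qed.

Lemma lincomb_unit {E : VecSpace} (l : list E) j k :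
  lincomb l (fun i => if Nat.eqb i (k + j) then 1 else 0) k = nth j l vs_zero.
Proof.
revert j k; induction l; intros j k; simpl.
- destruct j; reflexivity.
- destruct j as [|j].
  + rewrite Nat.add_0_r, Nat.eqb_refl, vs_scal1.
    rewrite (lincomb_ext l _ (fun _ => 0)), lincomb0, vs_add0; [reflexivity|].
    intros i Hi. destruct (Nat.eqb_spec i k); [lia|reflexivity].
  + replace (Nat.eqb k (k + S j)) with false by (symmetry; apply Nat.eqb_neq; lia).
    rewrite vs_scal0l, (vs_addC _ vs_zero), vs_add0, <- (IHl j (S k)).
    apply lincomb_ext. intros i _. replace (S k + j)%nat with (k + S j)%nat by lia. reflexivity.
Qed.

Lemma vterm_eval_lincomb {E : VecSpace} (l : list E) e :
  vterm_eval l e = lincomb l (vterm_coef e) 0.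
Proof.
induction e; simpl.
- rewrite <- (lincomb_unit l i 0). apply lincomb_ext. intros; reflexivity.
- rewrite lincomb0; reflexivity.
- rewrite IHe1, IHe2, <- lincomb_add; reflexivity.
- rewrite IHe, vs_opp_scal, <- lincomb_scal. apply lincomb_ext. intros; ring.
- rewrite IHe, <- lincomb_scal; reflexivity.
Qed.

Lemma vterm_eval_coef_eq {E : VecSpace} (l : list E) e1 e2 :
  (forall i, vterm_coef e1 i = vterm_coef e2 i) -> vterm_eval l e1 = vterm_eval l e2.
Proof. intro H. rewrite !vterm_eval_lincomb. apply lincomb_ext; auto. Qed.

Ltac vlookup x l :=
  lazymatch l with
  | (x :: _) => constr:(0%nat)
  | (_ :: ?l') => let n := vlookup x l' in constr:(S n)
  end.

Ltac vreify l t :=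
  lazymatch t with
  | vs_add ?a ?b => let ra := vreify l a in let rb := vreify l b in constr:(VAdd ra rb)
  | vs_sub ?a ?b => let ra := vreify l a in let rb := vreify l b in constr:(VAdd ra (VOpp rb))
  | vs_opp ?a => let ra := vreify l a in constr:(VOpp ra)
  | vs_scal ?r ?a => let ra := vreify l a in constr:(VScal r ra)
  | vs_zero => constr:(VZero)
  | _ => let i := vlookup t l in constr:(VAtom i)
  end.

Ltac vcases l i tac :=
  lazymatch l with
  | nil => simpl; tac
  | _ :: ?l' => destruct i as [|i]; [simpl; tac | vcases l' i tac]
  end.

Ltac vsolveT l tac :=
  lazymatch goal with
  | |- ?a = ?b =>
    let ea := vreify l a in let eb := vreify l b in
    change (vterm_eval l ea = vterm_eval l eb); apply vterm_eval_coef_eq;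
    let i := fresh "i" in intro i; vcases l i tac
  end.

Tactic Notation "vsolve" constr(l) := vsolveT l ltac:(ring).

Definition infR (A : R -> Prop) : R := epsilon (inhabits 0) (fun g => is_inf A g).

Lemma infR_is_inf (A : R -> Prop) : (exists r, A r) -> (exists b, forall r, A r -> b <= r) ->
  is_inf A (infR A).
Proof.
intros [r0 Hr0] [b Hb]. unfold infR. apply epsilon_spec.
destruct (completeness (fun y => A (- y))) as [s [Hs1 Hs2]].
- exists (- b). intros y Hy. apply Hb in Hy. lra.
- exists (- r0). rewrite Ropp_involutive. exact Hr0.
- exists (- s). split.
  + intros r Hr. assert (- r <= s) by (apply Hs1; rewrite Ropp_involutive; exact Hr). lra.
  + intros y Hy. assert (s <= - y) by (apply Hs2; intros x Hx; apply Hy in Hx; lra). lra.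
Qed.

Lemma is_inf_lb A g r : is_inf A g -> A r -> g <= r.
Proof. intros [H _] Hr; auto. Qed.

Lemma is_inf_glb A g y : is_inf A g -> (forall r, A r -> y <= r) -> y <= g.
Proof. intros [_ H] Hr; auto. Qed.

Lemma is_inf_unique A a b : is_inf A a -> is_inf A b -> a = b.
Proof.
intros Ha Hb. apply Rle_antisym.
- apply (is_inf_glb A b a Hb). intros r Hr; apply (is_inf_lb A); auto.
- apply (is_inf_glb A a b Ha). intros r Hr; apply (is_inf_lb A); auto.
Qed.

Lemma is_inf_add_ge A B a b c : is_inf A a -> is_inf B b ->
  (forall r1 r2, A r1 -> B r2 -> c <= r1 + r2) -> c <= a + b.
Proof.
intros HA HB H.
assert (c - a <= b); [|lra].
apply (is_inf_glb B _ _ HB). intros r2 Hr2.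
assert (c - r2 <= a); [|lra].
apply (is_inf_glb A _ _ HA). intros r1 Hr1. specialize (H r1 r2 Hr1 Hr2). lra.
Qed.

Lemma is_inf_scal_le A B a b s : is_inf A a -> is_inf B b -> 0 < s ->
  (forall r, B r -> exists r', A r' /\ r' <= s * r) -> a <= s * b.
Proof.
intros HA HB Hs H.
assert (a / s <= b).
{ apply (is_inf_glb B _ _ HB). intros r Hr. destruct (H r Hr) as [r' [Hr' Hle]].
  assert (a <= s * r) by (apply Rle_trans with r'; auto; apply (is_inf_lb A); auto).
  apply Rmult_le_reg_l with s; auto. replace (s * (a / s)) with a by (field; lra). lra. }
replace a with (s * (a / s)) by (field; lra). apply Rmult_le_compat_l; lra.
Qed.

Section Subspace.
Context {E : VecSpace} {S : E -> Prop} (HS : is_subspace E S).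

Lemma subspace_0 : S vs_zero. Proof. apply HS. Qed.
Lemma subspace_add x y : S x -> S y -> S (vs_add x y). Proof. apply HS. Qed.
Lemma subspace_scal a x : S x -> S (vs_scal a x). Proof. apply HS. Qed.
Lemma subspace_opp x : S x -> S (vs_opp x).
Proof. intro Hx. rewrite vs_opp_scal. apply subspace_scal; auto. Qed.
Lemma subspace_sub x y : S x -> S y -> S (vs_sub x y).
Proof. intros Hx Hy. apply subspace_add, subspace_opp; auto. Qed.
Lemma subspace_comb a b x y : S x -> S y -> S (vs_add (vs_scal a x) (vs_scal b y)).
Proof. intros Hx Hy. apply subspace_add; apply subspace_scal; auto. Qed.

End Subspace.

Definition sublinear (E : VecSpace) (S : E -> Prop) (p : E -> R) : Prop :=
  (forall x y, S x -> S y -> p (vs_add x y) <= p x + p y) /\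
  (forall a x, 0 < a -> S x -> p (vs_scal a x) <= a * p x).

Definition linear_on (E : VecSpace) (S : E -> Prop) (f : E -> R) : Prop :=
  (forall x y, S x -> S y -> f (vs_add x y) = f x + f y) /\
  (forall a x, S x -> f (vs_scal a x) = a * f x).

Section HahnBanach.
Context {E : VecSpace} {S : E -> Prop} (HS : is_subspace E S).

Lemma sublinear_0 p : sublinear E S p -> p vs_zero = 0.
Proof.
intros [_ h]. pose proof (h 2 vs_zero ltac:(lra) (subspace_0 HS)) as h1.
pose proof (h (/2) vs_zero ltac:(lra) (subspace_0 HS)) as h2.
rewrite vs_scal0r in h1, h2. lra.
Qed.

Lemma sublinear_scal p a x : sublinear E S p -> 0 <= a -> S x -> p (vs_scal a x) = a * p x.
Proof.
intros Hp Ha Hx. destruct Ha as [Ha|<-].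
- pose proof Hp as [_ h]. apply Rle_antisym; auto.
  pose proof (h (/a) (vs_scal a x) ltac:(apply Rinv_0_lt_compat; auto)
                (subspace_scal HS a x Hx)) as h1.
  rewrite vs_scalA, Rinv_l, vs_scal1 in h1 by lra.
  apply Rmult_le_compat_l with (r := a) in h1; [|lra].
  rewrite <- Rmult_assoc, Rinv_r, Rmult_1_l in h1 by lra. exact h1.
- rewrite vs_scal0l, sublinear_0; auto. ring.
Qed.

Lemma sublinear_opp_ge p x : sublinear E S p -> S x -> 0 <= p x + p (vs_opp x).
Proof.
intros Hp Hx. rewrite <- (sublinear_0 p Hp), <- (vs_addN _ x).
apply Hp; auto. apply subspace_opp; auto.
Qed.

Definition sublinear_shift (p : E -> R) (x y : E) : R :=
  infR (fun r => exists t, 0 <= t /\ r = p (vs_add y (vs_scal t x)) - t * p x).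

Lemma sublinear_shift_is_inf p x y : sublinear E S p -> S x -> S y ->
  is_inf (fun r => exists t, 0 <= t /\ r = p (vs_add y (vs_scal t x)) - t * p x)
         (sublinear_shift p x y).
Proof.
intros Hp Hx Hy. apply infR_is_inf.
- exists (p (vs_add y (vs_scal 0 x)) - 0 * p x), 0. split; [lra|reflexivity].
- exists (- p (vs_opp y)). intros r [t [Ht ->]].
  assert (Hyt : S (vs_add y (vs_scal t x))) by (apply subspace_add, subspace_scal; auto).
  pose proof (proj1 Hp _ _ Hyt (subspace_opp HS y Hy)) as h.
  replace (vs_add (vs_add y (vs_scal t x)) (vs_opp y)) with (vs_scal t x) in h
    by vsolve (x :: y :: nil).
  rewrite sublinear_scal in h; auto. lra.
Qed.

Lemma sublinear_shift_at p x y t : sublinear E S p -> S x -> S y -> 0 <= t ->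
  sublinear_shift p x y <= p (vs_add y (vs_scal t x)) - t * p x.
Proof.
intros Hp Hx Hy Ht. apply (is_inf_lb _ _ _ (sublinear_shift_is_inf p x y Hp Hx Hy)). eauto.
Qed.

Lemma sublinear_shift_le p x y : sublinear E S p -> S x -> S y -> sublinear_shift p x y <= p y.
Proof.
intros Hp Hx Hy. pose proof (sublinear_shift_at p x y 0 Hp Hx Hy (Rle_refl 0)) as h.
replace (vs_add y (vs_scal 0 x)) with y in h by vsolve (x :: y :: nil). lra.
Qed.

Lemma sublinear_shift_opp p x : sublinear E S p -> S x ->
  sublinear_shift p x (vs_opp x) <= - p x.
Proof.
intros Hp Hx.
pose proof (sublinear_shift_at p x _ 1 Hp Hx (subspace_opp HS x Hx) ltac:(lra)) as h.
replace (vs_add (vs_opp x) (vs_scal 1 x)) with (@vs_zero E) in h by vsolve (x :: nil).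
rewrite sublinear_0 in h; auto. lra.
Qed.

Lemma sublinear_shift_sublinear p x : sublinear E S p -> S x ->
  sublinear E S (sublinear_shift p x).
Proof.
intros Hp Hx. split.
- intros y1 y2 Hy1 Hy2.
  apply (is_inf_add_ge _ _ _ _ _ (sublinear_shift_is_inf p x y1 Hp Hx Hy1)
                                 (sublinear_shift_is_inf p x y2 Hp Hx Hy2)).
  intros r1 r2 [t1 [Ht1 ->]] [t2 [Ht2 ->]].
  pose proof (sublinear_shift_at p x _ (t1 + t2) Hp Hx (subspace_add HS y1 y2 Hy1 Hy2)
                ltac:(lra)) as h.
  replace (vs_add (vs_add y1 y2) (vs_scal (t1 + t2) x)) with
    (vs_add (vs_add y1 (vs_scal t1 x)) (vs_add y2 (vs_scal t2 x))) in h
    by vsolve (x :: y1 :: y2 :: nil).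
  pose proof (proj1 Hp (vs_add y1 (vs_scal t1 x)) (vs_add y2 (vs_scal t2 x))
    ltac:(apply subspace_add, subspace_scal; auto) ltac:(apply subspace_add, subspace_scal; auto)).
  lra.
- intros a y Ha Hy.
  apply (is_inf_scal_le _ _ _ _ _ (sublinear_shift_is_inf p x _ Hp Hx (subspace_scal HS a y Hy))
                                  (sublinear_shift_is_inf p x y Hp Hx Hy) Ha).
  intros r [t [Ht ->]].
  exists (p (vs_add (vs_scal a y) (vs_scal (a * t) x)) - (a * t) * p x). split.
  + exists (a * t); split; [apply Rmult_le_pos; lra|reflexivity].
  + replace (vs_add (vs_scal a y) (vs_scal (a * t) x)) with (vs_scal a (vs_add y (vs_scal t x)))
      by vsolve (x :: y :: nil).
    assert (S (vs_add y (vs_scal t x))) by (apply (subspace_add HS), (subspace_scal HS); auto).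
    rewrite (sublinear_scal p) by (auto; lra). lra.
Qed.

Definition minimal_sublinear (q : E -> R) : Prop :=
  sublinear E S q /\
  forall q', sublinear E S q' -> (forall x, S x -> q' x <= q x) -> forall x, S x -> q x <= q' x.

(* Each member is bounded below by [x |-> - p (- x)], so the pointwise infimum is finite. *)
Lemma sublinear_chain_inf (p : E -> R) (G : (E -> R) -> Prop) :
  G p -> (forall g, G g -> sublinear E S g /\ forall x, S x -> g x <= p x) ->
  (forall g1 g2, G g1 -> G g2 ->
     (forall x, S x -> g1 x <= g2 x) \/ (forall x, S x -> g2 x <= g1 x)) ->
  exists q, sublinear E S q /\ forall g x, G g -> S x -> q x <= g x.
Proof.
intros Gp G_sub G_tot.
set (C := fun x r => exists g, G g /\ r = g x).
set (q := fun x => infR (C x)).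
assert (q_inf : forall x, S x -> is_inf (C x) (q x)).
{ intros x Hx. apply infR_is_inf.
  - exists (p x), p. split; auto.
  - exists (- p (vs_opp x)). intros r [g [Hg ->]].
    pose proof (sublinear_opp_ge g x (proj1 (G_sub g Hg)) Hx).
    pose proof (proj2 (G_sub g Hg) (vs_opp x) (subspace_opp HS x Hx)). lra. }
assert (q_le : forall g x, G g -> S x -> q x <= g x).
{ intros g x Hg Hx. apply (is_inf_lb _ _ _ (q_inf x Hx)). exists g; auto. }
exists q. split; auto. split.
- intros x y Hx Hy. apply (is_inf_add_ge _ _ _ _ _ (q_inf x Hx) (q_inf y Hy)).
  intros r1 r2 [g1 [Hg1 ->]] [g2 [Hg2 ->]].
  pose proof (proj1 (proj1 (G_sub g1 Hg1)) x y Hx Hy).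
  pose proof (proj1 (proj1 (G_sub g2 Hg2)) x y Hx Hy).
  pose proof (q_le g1 _ Hg1 (subspace_add HS x y Hx Hy)).
  pose proof (q_le g2 _ Hg2 (subspace_add HS x y Hx Hy)).
  destruct (G_tot g1 g2 Hg1 Hg2) as [h|h]; [specialize (h y Hy)|specialize (h x Hx)]; lra.
- intros a x Ha Hx.
  apply (is_inf_scal_le _ _ _ _ _ (q_inf _ (subspace_scal HS a x Hx)) (q_inf x Hx) Ha).
  intros r [g [Hg ->]]. exists (g (vs_scal a x)). split.
  + exists g; auto.
  + apply (proj1 (G_sub g Hg)); auto.
Qed.

Lemma minimal_sublinear_below p : sublinear E S p ->
  exists q, minimal_sublinear q /\ forall x, S x -> q x <= p x.
Proof.
intros Hp.
set (Q := {q : E -> R | sublinear E S q /\ forall x, S x -> q x <= p x}).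
set (Rl := fun q1 q2 : Q => forall x, S x -> proj1_sig q2 x <= proj1_sig q1 x).
destruct (zorn_preorder Q (exist _ p (conj Hp (fun x _ => Rle_refl _))) Rl)
  as [[qm [Hqm Hqmp]] Hmax].
- intros q x _; lra.
- intros q1 q2 q3 h12 h23 x Hx. specialize (h12 x Hx); specialize (h23 x Hx); lra.
- intros A tot.
  destruct (sublinear_chain_inf p (fun g => g = p \/ exists q, A q /\ g = proj1_sig q))
    as [qs [Hqs Hqs_le]].
  + left; auto.
  + intros g [->|[q [_ ->]]]; [split; auto; intros; lra|exact (proj2_sig q)].
  + intros g1 g2 [->|[q1 [Hq1 ->]]] [->|[q2 [Hq2 ->]]].
    * left; intros; lra.
    * right; apply (proj2_sig q2).
    * left; apply (proj2_sig q1).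
    * destruct (tot q1 q2 Hq1 Hq2) as [h|h]; [right|left]; exact h.
  + assert (Hqsp : forall x, S x -> qs x <= p x) by (intros; apply Hqs_le; auto).
    exists (exist _ qs (conj Hqs Hqsp)). intros q Aq x Hx. apply Hqs_le; eauto.
- exists qm. split; auto. split; auto.
  intros q' Hq' Hle x Hx.
  assert (Hq'p : forall y, S y -> q' y <= p y).
  { intros y Hy. pose proof (Hle y Hy). pose proof (Hqmp y Hy). lra. }
  exact (Hmax (exist _ q' (conj Hq' Hq'p)) Hle x Hx).
Qed.

(* Otherwise the shift of [q] in direction [x] would be strictly smaller. *)
Lemma minimal_sublinear_opp q x : minimal_sublinear q -> S x -> q (vs_opp x) = - q x.
Proof.
intros [Hq Hmin] Hx.
pose proof (Hmin (sublinear_shift q x) (sublinear_shift_sublinear q x Hq Hx)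
                 (fun y Hy => sublinear_shift_le q x y Hq Hx Hy) (vs_opp x) (subspace_opp HS x Hx)).
pose proof (sublinear_shift_opp q x Hq Hx).
pose proof (sublinear_opp_ge q x Hq Hx). lra.
Qed.

Lemma minimal_sublinear_linear q : minimal_sublinear q -> linear_on E S q.
Proof.
intros Hmin. pose proof (proj1 Hmin) as Hq. pose proof Hq as [Hadd _].
assert (Hopp : forall x, S x -> q (vs_opp x) = - q x)
  by (intros; apply minimal_sublinear_opp; auto).
split.
- intros x y Hx Hy. apply Rle_antisym; auto.
  assert (q (vs_opp (vs_add x y)) <= q (vs_opp x) + q (vs_opp y)).
  { replace (vs_opp (vs_add x y)) with (vs_add (vs_opp x) (vs_opp y)) by vsolve (x :: y :: nil).
    apply Hadd; apply (subspace_opp HS); auto. }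
  rewrite !Hopp in H by (auto; apply (subspace_add HS); auto). lra.
- intros a x Hx. destruct (Rle_lt_dec 0 a) as [Ha|Ha].
  + apply (sublinear_scal q); auto.
  + replace (vs_scal a x) with (vs_opp (vs_scal (- a) x)) by vsolve (x :: nil).
    rewrite Hopp, (sublinear_scal q (-a) x) by (auto; try lra; apply (subspace_scal HS); auto).
    ring.
Qed.

Theorem hahn_banach p z : sublinear E S p -> S z ->
  exists f, linear_on E S f /\ (forall x, S x -> f x <= p x) /\ f z = p z.
Proof.
intros Hp Hz.
destruct (minimal_sublinear_below (sublinear_shift p z) (sublinear_shift_sublinear p z Hp Hz))
  as [f [Hmin Hf]].
pose proof (minimal_sublinear_linear f Hmin) as Hlin.
assert (Hfp : forall x, S x -> f x <= p x).
{ intros x Hx. eapply Rle_trans; [apply Hf; auto|apply sublinear_shift_le; auto]. }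
exists f. split; [|split]; auto.
apply Rle_antisym; auto.
pose proof (Hf (vs_opp z) (subspace_opp HS z Hz)).
pose proof (sublinear_shift_opp p z Hp Hz).
rewrite (minimal_sublinear_opp f z Hmin Hz) in H. lra.
Qed.

End HahnBanach.

Definition seq_space : VecSpace.
refine (mkVecSpace (nat -> R) (fun a b j => a j + b j) (fun _ => 0) (fun a j => - a j)
  (fun c a j => c * a j) _ _ _ _ _ _ _ _); intros; extensionality j; ring.
Defined.

Definition bounded_seq (a : nat -> R) : Prop := exists K, forall j, Rabs (a j) <= K.

Lemma bounded_seq_subspace : is_subspace seq_space bounded_seq.
Proof.
split; [|split].
- exists 0. intro j. simpl. rewrite Rabs_R0; lra.
- intros x y [K1 H1] [K2 H2]. exists (K1 + K2). intro j. simpl.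
  pose proof (Rabs_triang (x j) (y j)). specialize (H1 j); specialize (H2 j); lra.
- intros c x [K H]. exists (Rabs c * K). intro j. simpl. rewrite Rabs_mult.
  apply Rmult_le_compat_l; [apply Rabs_pos|auto].
Qed.

Definition eventual_ub (a : nat -> R) (c : R) : Prop :=
  exists k, forall j, (k <= j)%nat -> a j <= c.

Definition limsup_seq (a : nat -> R) : R := infR (eventual_ub a).

Lemma limsup_seq_is_inf a : bounded_seq a -> is_inf (eventual_ub a) (limsup_seq a).
Proof.
intros [K HK]. apply infR_is_inf.
- exists K, 0%nat. intros j _. specialize (HK j). pose proof (RRle_abs (a j)). lra.
- exists (- K). intros c [k Hk]. specialize (Hk k (le_n k)). specialize (HK k).
  pose proof (Rabs_Ropp (a k)). pose proof (RRle_abs (- a k)). lra.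
Qed.

Lemma limsup_seq_sublinear : sublinear seq_space bounded_seq limsup_seq.
Proof.
split.
- intros x y Hx Hy.
  apply (is_inf_add_ge _ _ _ _ _ (limsup_seq_is_inf x Hx) (limsup_seq_is_inf y Hy)).
  intros r1 r2 [k1 H1] [k2 H2].
  apply (is_inf_lb _ _ _ (limsup_seq_is_inf _ (subspace_add bounded_seq_subspace x y Hx Hy))).
  exists (Nat.max k1 k2). intros j Hj. simpl.
  specialize (H1 j ltac:(lia)); specialize (H2 j ltac:(lia)). lra.
- intros s x Hs Hx.
  apply (is_inf_scal_le _ _ _ _ _ (limsup_seq_is_inf _ (subspace_scal bounded_seq_subspace s x Hx))
                                  (limsup_seq_is_inf x Hx) Hs).
  intros r [k Hk]. exists (s * r). split; [|lra]. exists k. intros j Hj. simpl.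
  apply Rmult_le_compat_l; [lra|auto].
Qed.

Lemma banach_limit_exists : exists L : (nat -> R) -> R,
  (forall a b, bounded_seq a -> bounded_seq b -> L (fun j => a j + b j) = L a + L b) /\
  (forall c a, bounded_seq a -> L (fun j => c * a j) = c * L a) /\
  (forall a c, bounded_seq a -> eventual_ub a c -> L a <= c) /\
  (forall a K, (forall j, Rabs (a j) <= K) -> Rabs (L a) <= K).
Proof.
destruct (hahn_banach bounded_seq_subspace limsup_seq (fun _ => 0) limsup_seq_sublinear
            (subspace_0 bounded_seq_subspace)) as [L [[HLadd HLscal] [HLle _]]].
assert (HLub : forall a c, bounded_seq a -> eventual_ub a c -> L a <= c).
{ intros a c Ha Hc. apply Rle_trans with (limsup_seq a); auto.
  apply (is_inf_lb _ _ _ (limsup_seq_is_inf a Ha)); auto. }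
exists L. split; [|split; [|split]]; auto.
intros a K HK. assert (Ha : bounded_seq a) by (exists K; auto).
assert (h1 : L a <= K).
{ apply HLub; auto. exists 0%nat. intros j _. pose proof (RRle_abs (a j)). specialize (HK j). lra. }
assert (h2 : L (fun j => -1 * a j) <= K).
{ apply HLub; [apply (subspace_scal bounded_seq_subspace (-1) a Ha)|].
  exists 0%nat. intros j _. pose proof (RRle_abs (- a j)). rewrite Rabs_Ropp in H.
  specialize (HK j). lra. }
pose proof (HLscal (-1) a Ha) as h3. simpl in h3. rewrite h3 in h2. apply Rabs_le. lra.
Qed.

Lemma inv_succ_pos j : 0 < / (INR j + 1).
Proof. apply Rinv_0_lt_compat. pose proof (pos_INR j); lra. Qed.

Lemma inv_succ_lt eps : 0 < eps -> exists N, / (INR N + 1) < eps.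
Proof.
intro H. destruct (archimed_cor1 eps H) as [N [H1 H2]]. exists N.
apply Rle_lt_trans with (/ INR N); auto. apply Rinv_le_contravar.
- apply lt_0_INR; auto.
- lra.
Qed.

Lemma inv_succ_le k j : (k <= j)%nat -> / (INR j + 1) <= / (INR k + 1).
Proof.
intro H. apply Rinv_le_contravar.
- pose proof (pos_INR k); lra.
- apply le_INR in H. lra.
Qed.

Lemma le_of_le_add_inv_succ x b : (forall j, x <= b + / (INR j + 1)) -> x <= b.
Proof.
intro H. destruct (Rle_dec x b) as [h|h]; auto.
destruct (inv_succ_lt (x - b)) as [N HN]; [lra|]. specialize (H N). lra.
Qed.

Definition convex_set {E : VecSpace} (C : E -> Prop) : Prop :=
  forall a b l, C a -> C b -> 0 <= l <= 1 -> C (vs_add (vs_scal l a) (vs_scal (1 - l) b)).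

Definition seq_closed (E : VecSpace) (S : E -> Prop) (n : E -> R) (C : E -> Prop) : Prop :=
  forall (w : nat -> E) v, (forall j, C (w j)) -> S v -> converges E n w v -> C v.

Section Normed.
Context {E : VecSpace} {S : E -> Prop} {n : E -> R} (HS : is_subspace E S) (Hn : is_norm_on E S n).

Lemma norm_nonneg x : S x -> 0 <= n x. Proof. apply Hn. Qed.
Lemma norm_scal a x : S x -> n (vs_scal a x) = Rabs a * n x. Proof. apply Hn. Qed.
Lemma norm_triangle x y : S x -> S y -> n (vs_add x y) <= n x + n y. Proof. apply Hn. Qed.
Lemma norm_eq0 x : S x -> n x = 0 -> x = vs_zero. Proof. apply Hn. Qed.

Lemma norm_opp x : S x -> n (vs_opp x) = n x.
Proof.
intro Hx. rewrite vs_opp_scal, norm_scal by auto.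
replace (Rabs (-1)) with 1 by (rewrite Rabs_left; lra). ring.
Qed.

Lemma norm_sub_sym x y : S x -> S y -> n (vs_sub x y) = n (vs_sub y x).
Proof.
intros Hx Hy. replace (vs_sub x y) with (vs_opp (vs_sub y x)) by vsolve (x :: y :: nil).
apply norm_opp, (subspace_sub HS); auto.
Qed.

Lemma norm_sub_triangle x y z : S x -> S y -> S z ->
  n (vs_sub x z) <= n (vs_sub x y) + n (vs_sub y z).
Proof.
intros Hx Hy Hz.
replace (vs_sub x z) with (vs_add (vs_sub x y) (vs_sub y z)) by vsolve (x :: y :: z :: nil).
apply norm_triangle; apply (subspace_sub HS); auto.
Qed.

Lemma norm_le_add_dist x y : S x -> S y -> n y <= n x + n (vs_sub x y).
Proof.
intros Hx Hy. replace y with (vs_add x (vs_opp (vs_sub x y))) at 1 by vsolve (x :: y :: nil).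
rewrite <- (norm_opp (vs_sub x y)) by (apply (subspace_sub HS); auto).
apply norm_triangle; auto. apply (subspace_opp HS), (subspace_sub HS); auto.
Qed.

Lemma convex_comb_norm_le x y l r : S x -> S y -> 0 <= l <= 1 -> n x <= r -> n y <= r ->
  n (vs_add (vs_scal l x) (vs_scal (1 - l) y)) <= r.
Proof.
intros Hx Hy Hl Hnx Hny.
eapply Rle_trans; [apply norm_triangle; apply (subspace_scal HS); auto|].
rewrite !norm_scal, (Rabs_right l), (Rabs_right (1 - l)) by (auto; lra).
apply Rle_trans with (l * r + (1 - l) * r); [|lra].
apply Rplus_le_compat; apply Rmult_le_compat_l; lra.
Qed.

Lemma dist_pos_of_closed C v : seq_closed E S n C -> (forall w, C w -> S w) -> S v -> ~ C v ->
  exists del, 0 < del /\ forall w, C w -> del <= n (vs_sub v w).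
Proof.
intros HC HCS Hv Hnot. apply NNPP. intro Hno.
assert (Hseq : forall j, exists w, C w /\ n (vs_sub v w) < / (INR j + 1)).
{ intro j. apply NNPP. intro hj. apply Hno. exists (/ (INR j + 1)). split; [apply inv_succ_pos|].
  intros w Hw. apply Rnot_lt_le. intro hl. apply hj. exists w; auto. }
set (ws := fun j => proj1_sig (constructive_indefinite_description _ (Hseq j))).
assert (Hws : forall j, C (ws j) /\ n (vs_sub v (ws j)) < / (INR j + 1))
  by (intro j; exact (proj2_sig (constructive_indefinite_description _ (Hseq j)))).
apply Hnot, (HC ws); auto; [intro j; apply Hws|].
intros eps Heps. destruct (inv_succ_lt eps Heps) as [N HN]. exists N. intros j Hj.
rewrite norm_sub_sym by (auto; apply HCS, Hws).
pose proof (inv_succ_le _ _ Hj). pose proof (proj2 (Hws j)). lra.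
Qed.

Section Gauge.
Variables (D : E -> Prop) (r : R).
Hypotheses (HDS : forall w, D w -> S w) (HD0 : D vs_zero) (HDc : convex_set D) (Hr : 0 < r).

(* The Minkowski functional of the [r]-neighbourhood of [D]. *)
Definition gauge_set (y : E) (t : R) : Prop :=
  0 <= t /\ exists w, D w /\ n (vs_sub y (vs_scal t w)) <= t * r.

Definition gauge (y : E) : R := infR (gauge_set y).

Lemma gauge_set_norm y : S y -> gauge_set y (n y / r).
Proof.
intro Hy. split.
- apply Rmult_le_pos; [apply norm_nonneg; auto|left; apply Rinv_0_lt_compat; auto].
- exists vs_zero. split; auto.
  replace (vs_sub y (vs_scal (n y / r) vs_zero)) with y by vsolve (y :: nil).
  right; field; lra.
Qed.

Lemma gauge_is_inf y : S y -> is_inf (gauge_set y) (gauge y).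
Proof.
intros Hy. apply infR_is_inf.
- exists (n y / r). apply gauge_set_norm; auto.
- exists 0. intros t [Ht _]; auto.
Qed.

Lemma gauge_le y t : S y -> gauge_set y t -> gauge y <= t.
Proof. intros Hy Ht. apply (is_inf_lb _ _ _ (gauge_is_inf y Hy)); auto. Qed.

Lemma cone_comb t1 t2 w1 w2 : 0 <= t1 -> 0 <= t2 -> D w1 -> D w2 ->
  exists w, D w /\ vs_scal (t1 + t2) w = vs_add (vs_scal t1 w1) (vs_scal t2 w2).
Proof.
intros Ht1 Ht2 Hw1 Hw2. destruct (Req_dec (t1 + t2) 0) as [H0|H0].
- assert (t1 = 0) by lra. assert (t2 = 0) by lra. subst. exists w1. split; auto.
  rewrite H0. vsolve (w1 :: w2 :: nil).
- exists (vs_add (vs_scal (t1 / (t1 + t2)) w1) (vs_scal (1 - t1 / (t1 + t2)) w2)). split.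
  + apply HDc; auto. split.
    * apply Rmult_le_pos; auto. left; apply Rinv_0_lt_compat; lra.
    * apply Rmult_le_reg_l with (t1 + t2); [lra|]. field_simplify; lra.
  + vsolveT (w1 :: w2 :: nil) ltac:(field; lra).
Qed.

Lemma gauge_sublinear : sublinear E S gauge.
Proof.
split.
- intros x y Hx Hy. apply (is_inf_add_ge _ _ _ _ _ (gauge_is_inf x Hx) (gauge_is_inf y Hy)).
  intros t1 t2 [Ht1 [w1 [Hw1 N1]]] [Ht2 [w2 [Hw2 N2]]].
  apply gauge_le; [apply (subspace_add HS); auto|]. split; [lra|].
  destruct (cone_comb t1 t2 w1 w2) as [w [Hw Hweq]]; auto. exists w. split; auto.
  replace (vs_sub (vs_add x y) (vs_scal (t1 + t2) w)) with
    (vs_add (vs_sub x (vs_scal t1 w1)) (vs_sub y (vs_scal t2 w2)))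
    by (unfold vs_sub; rewrite Hweq; vsolve (x :: y :: w1 :: w2 :: nil)).
  eapply Rle_trans; [apply norm_triangle|lra]; apply (subspace_sub HS); auto;
    apply (subspace_scal HS); auto.
- intros a x Ha Hx.
  apply (is_inf_scal_le _ _ _ _ _ (gauge_is_inf _ (subspace_scal HS a x Hx))
                                  (gauge_is_inf x Hx) Ha).
  intros t [Ht [w [Hw N]]]. exists (a * t). split; [|lra]. split; [apply Rmult_le_pos; lra|].
  exists w. split; auto.
  replace (vs_sub (vs_scal a x) (vs_scal (a * t) w)) with (vs_scal a (vs_sub x (vs_scal t w)))
    by vsolve (x :: w :: nil).
  rewrite norm_scal, Rabs_right by (try lra; apply (subspace_sub HS), (subspace_scal HS); auto).
  replace (a * t * r) with (a * (t * r)) by ring. apply Rmult_le_compat_l; lra.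
Qed.

Lemma gauge_ge1 z : S z -> (forall w, D w -> r < n (vs_sub z w)) -> 1 <= gauge z.
Proof.
intros Hz Hgap. apply (is_inf_glb _ _ _ (gauge_is_inf z Hz)). intros t [Ht [w [Hw N]]].
apply Rnot_lt_le. intro Hlt.
assert (Dtw : D (vs_scal t w)).
{ replace (vs_scal t w) with (vs_add (vs_scal t w) (vs_scal (1 - t) vs_zero)) by vsolve (w :: nil).
  apply HDc; auto; lra. }
specialize (Hgap _ Dtw). nra.
Qed.

Lemma separation_convex0 z : S z -> (forall w, D w -> r < n (vs_sub z w)) ->
  exists f, bounded_linear E S n f /\ exists eps, 0 < eps /\ forall w, D w -> f w + eps <= f z.
Proof.
intros Hz Hgap.
destruct (hahn_banach HS gauge z gauge_sublinear Hz) as [f [[Hfadd Hfscal] [Hfle Hfz]]].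
pose proof (gauge_ge1 z Hz Hgap) as Hz1.
assert (Hfn : forall x, S x -> f x <= n x / r).
{ intros x Hx. eapply Rle_trans; [apply Hfle; auto|apply gauge_le, gauge_set_norm; auto]. }
exists f. split.
- split; [|split]; auto. exists (/ r). intros x Hx. apply Rabs_le. split.
  + pose proof (Hfn (vs_opp x) (subspace_opp HS x Hx)).
    rewrite norm_opp, vs_opp_scal, Hfscal in H by auto. unfold Rdiv in H. lra.
  + pose proof (Hfn x Hx). unfold Rdiv in H. lra.
- assert (Hnz : r < n z).
  { specialize (Hgap _ HD0).
    replace (vs_sub z vs_zero) with z in Hgap by vsolve (z :: nil). exact Hgap. }
  (* [u] has norm [r], so [w + u] lies in the gauge's unit ball for every [w] in [D] *)
  set (s := r / n z).
  assert (Hs : 0 < s) by (apply Rdiv_lt_0_compat; lra).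
  set (u := vs_scal s z).
  assert (Hu : S u) by (apply (subspace_scal HS); auto).
  exists s. split; auto. intros w Hw.
  assert (Hwu : gauge (vs_add w u) <= 1).
  { apply gauge_le; [apply (subspace_add HS); auto|]. split; [lra|]. exists w. split; auto.
    replace (vs_sub (vs_add w u) (vs_scal 1 w)) with u by vsolve (w :: u :: nil).
    unfold u. rewrite norm_scal, Rabs_right by (auto; lra). unfold s. right; field; lra. }
  pose proof (Hfle (vs_add w u) (subspace_add HS w u (HDS w Hw) Hu)).
  assert (Hfu : f u = s * f z) by (apply Hfscal; auto).
  rewrite Hfadd, Hfu in H by auto. nra.
Qed.

End Gauge.

Theorem separation_closed_convex C v : convex_set C -> seq_closed E S n C ->
  (forall w, C w -> S w) -> (exists c, C c) -> S v -> ~ C v ->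
  exists f, bounded_linear E S n f /\ exists eps, 0 < eps /\ forall w, C w -> f w + eps <= f v.
Proof.
intros HCc HCcl HCS [c Hc] Hv Hnot.
destruct (dist_pos_of_closed C v HCcl HCS Hv Hnot) as [del [Hdel Hgap]].
set (D := fun e => S e /\ C (vs_add e c)).
assert (Sc : S c) by auto.
destruct (separation_convex0 D (del / 2)) with (z := vs_sub v c)
  as [f [Hf [eps [Heps Hfe]]]].
- intros e He; apply He.
- split; [apply (subspace_0 HS)|]. replace (vs_add vs_zero c) with c by vsolve (c :: nil). exact Hc.
- intros a b l [Sa Ca] [Sb Cb] Hl. split; [apply (subspace_comb HS); auto|].
  replace (vs_add (vs_add (vs_scal l a) (vs_scal (1 - l) b)) c) with
    (vs_add (vs_scal l (vs_add a c)) (vs_scal (1 - l) (vs_add b c))) by vsolve (a :: b :: c :: nil).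
  apply HCc; auto.
- lra.
- apply (subspace_sub HS); auto.
- intros e [Se Ce]. replace (vs_sub (vs_sub v c) e) with (vs_sub v (vs_add e c))
    by vsolve (v :: e :: c :: nil).
  specialize (Hgap _ Ce). lra.
- exists f. split; auto. exists eps. split; auto. intros w Hw.
  destruct Hf as [Hfadd [Hfscal _]].
  assert (Hfsub : forall a b, S a -> S b -> f (vs_sub a b) = f a - f b).
  { intros a b Sa Sb. unfold vs_sub.
    rewrite Hfadd, vs_opp_scal, Hfscal by (auto; apply (subspace_opp HS); auto). ring. }
  assert (Dw : D (vs_sub w c)).
  { split; [apply (subspace_sub HS); auto|].
    replace (vs_add (vs_sub w c) c) with w by vsolve (w :: c :: nil). exact Hw. }
  specialize (Hfe _ Dw). rewrite !Hfsub in Hfe by auto. lra.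
Qed.

End Normed.

Section NearestPoint.
Context {E : VecSpace} {S : E -> Prop} {n : E -> R} (HS : is_subspace E S) (Hn : is_norm_on E S n).

(* The bidual element [f |-> L (f o vs)], for a Banach limit [L], is represented by a point [v]
   of [S]; separation then puts [v] in every closed convex set that eventually contains [vs]. *)
Lemma reflexive_cluster_point (vs : nat -> E) M : is_reflexive E S n ->
  (forall j, S (vs j)) -> (forall j, n (vs j) <= M) ->
  exists v, S v /\ forall C k, convex_set C -> seq_closed E S n C -> (forall w, C w -> S w) ->
    (forall j, (k <= j)%nat -> C (vs j)) -> C v.
Proof.
intros Hrefl Hvs HM.
destruct banach_limit_exists as [L [HLadd [HLscal [HLub HLbd]]]].
assert (Hfvs : forall f K, (forall x, S x -> Rabs (f x) <= K * n x) ->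
                 forall j, Rabs (f (vs j)) <= Rabs K * M).
{ intros f K HK j. eapply Rle_trans; [apply HK; auto|].
  eapply Rle_trans; [apply Rmult_le_compat_r; [apply (norm_nonneg Hn); auto|apply RRle_abs]|].
  apply Rmult_le_compat_l; [apply Rabs_pos|auto]. }
assert (Hbd : forall f, bounded_linear E S n f -> bounded_seq (fun j => f (vs j))).
{ intros f [_ [_ [K HK]]]. exists (Rabs K * M). apply Hfvs; auto. }
destruct (Hrefl (fun f => L (fun j => f (vs j)))) as [v [Sv Hv]].
{ split; [|split; [|split]].
  - intros f g _ _ Hfg. f_equal. extensionality j. apply Hfg; auto.
  - intros f g Hf Hg. apply HLadd; apply Hbd; auto.
  - intros a f Hf. apply HLscal; apply Hbd; auto.
  - exists M. intros f K Hf HK HfK. rewrite Rmult_comm. apply HLbd. intro j.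
    rewrite <- (Rabs_right K) by lra. apply Hfvs; auto. }
exists v. split; auto. intros C k HCc HCcl HCS HCvs.
apply NNPP. intro Hnot.
destruct (separation_closed_convex HS Hn C v HCc HCcl HCS (ex_intro _ (vs k) (HCvs k (le_n k)))
            Sv Hnot) as [f [Hf [eps [Heps Hsep]]]].
assert (L (fun j => f (vs j)) <= f v - eps).
{ apply HLub; [apply Hbd; auto|]. exists k. intros j Hj. specialize (Hsep _ (HCvs j Hj)). lra. }
rewrite (Hv f Hf) in H. lra.
Qed.

Lemma sublevel_convex C m rho : convex_set C -> (forall w, C w -> S w) -> S m ->
  convex_set (fun w => C w /\ n (vs_sub m w) <= rho).
Proof.
intros HCc HCS Hm a b l [Ca Na] [Cb Nb] Hl. split; [apply HCc; auto|].
replace (vs_sub m (vs_add (vs_scal l a) (vs_scal (1 - l) b))) with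
  (vs_add (vs_scal l (vs_sub m a)) (vs_scal (1 - l) (vs_sub m b))) by vsolve (m :: a :: b :: nil).
apply (convex_comb_norm_le HS Hn); auto; apply (subspace_sub HS); auto.
Qed.

Lemma sublevel_closed C m rho : seq_closed E S n C -> (forall w, C w -> S w) -> S m ->
  seq_closed E S n (fun w => C w /\ n (vs_sub m w) <= rho).
Proof.
intros HCcl HCS Hm w v Hw Hv Hconv. split; [apply (HCcl w); auto; apply Hw|].
apply le_of_le_add_inv_succ. intro j.
destruct (Hconv (/ (INR j + 1)) (inv_succ_pos j)) as [N HN].
specialize (HN N (le_n N)). destruct (Hw N) as [CwN NwN].
pose proof (norm_sub_triangle HS Hn m (w N) v Hm (HCS _ CwN) Hv). lra.
Qed.

Theorem nearest_point_exists C m : is_reflexive E S n -> convex_set C -> seq_closed E S n C ->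
  (forall w, C w -> S w) -> (exists c, C c) -> S m ->
  exists u, C u /\ is_inf (fun r => exists v, C v /\ r = n (vs_sub m v)) (n (vs_sub m u)).
Proof.
intros Hrefl HCc HCcl HCS [c Hc] Hm.
set (A := fun r => exists v, C v /\ r = n (vs_sub m v)).
assert (HA : is_inf A (infR A)).
{ apply infR_is_inf; [exists (n (vs_sub m c)), c; auto|].
  exists 0. intros r [w [Hw ->]]. apply (norm_nonneg Hn), (subspace_sub HS); auto. }
set (d := infR A) in *.
set (Dk := fun k w => C w /\ n (vs_sub m w) <= d + / (INR k + 1)).
assert (Hex : forall j, exists w, Dk j w).
{ intro j. apply NNPP. intro Hno.
  assert (d + / (INR j + 1) <= d); [|pose proof (inv_succ_pos j); lra].
  apply (is_inf_glb _ _ _ HA). intros r [w [Hw ->]].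
  apply Rnot_lt_le. intro Hlt. apply Hno. exists w. split; auto; lra. }
set (vs := fun j => proj1_sig (constructive_indefinite_description _ (Hex j))).
assert (Hvs : forall j, Dk j (vs j))
  by (intro j; exact (proj2_sig (constructive_indefinite_description _ (Hex j)))).
destruct (reflexive_cluster_point vs (n m + (d + 1)) Hrefl) as [v [Sv Hv]].
- intro j. apply HCS, Hvs.
- intro j. destruct (Hvs j) as [Cj Nj].
  pose proof (norm_le_add_dist HS Hn m (vs j) Hm (HCS _ Cj)).
  pose proof (inv_succ_le 0 j ltac:(lia)). simpl in H0. lra.
- assert (HDv : forall k, Dk k v).
  { intro k. apply (Hv _ k).
    - apply sublevel_convex; auto.
    - apply sublevel_closed; auto.
    - intros w [Cw _]; auto.
    - intros j Hj. destruct (Hvs j) as [Cj Nj]. split; auto.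
      pose proof (inv_succ_le _ _ Hj). lra. }
  exists v. split; [apply (HDv 0%nat)|].
  replace (n (vs_sub m v)) with d; auto.
  apply Rle_antisym.
  + apply (is_inf_lb _ _ _ HA). exists v. split; auto. apply (HDv 0%nat).
  + apply le_of_le_add_inv_succ. intro k. apply HDv.
Qed.

Lemma strictly_convex_midpoint_lt x y d : is_strictly_convex E S n -> S x -> S y ->
  n x = d -> n y = d -> x <> y -> n (vs_scal (/ 2) (vs_add x y)) < d.
Proof.
intros Hsc Hx Hy Nx Ny Hxy.
assert (Hd : 0 <= d) by (rewrite <- Nx; apply (norm_nonneg Hn); auto).
destruct (Req_dec d 0) as [Hd0|Hd0].
- exfalso. apply Hxy. rewrite (norm_eq0 Hn x), (norm_eq0 Hn y); auto; lra.
- assert (Hdinv : 0 < / d) by (apply Rinv_0_lt_compat; lra).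
  assert (Hunit : forall w, S w -> n w = d -> n (vs_scal (/ d) w) = 1).
  { intros w Sw Nw. rewrite (norm_scal Hn), Nw, Rabs_right by (auto; lra). field; lra. }
  assert (Hne : vs_scal (/ d) x <> vs_scal (/ d) y).
  { intro h. apply Hxy.
    replace x with (vs_scal d (vs_scal (/ d) x)) by vsolveT (x :: nil) ltac:(field; lra).
    rewrite h. vsolveT (y :: nil) ltac:(field; lra). }
  pose proof (Hsc _ _ (subspace_scal HS _ _ Hx) (subspace_scal HS _ _ Hy)
                  (Hunit x Hx Nx) (Hunit y Hy Ny) Hne) as h.
  replace (vs_scal (/ 2) (vs_add (vs_scal (/ d) x) (vs_scal (/ d) y)))
    with (vs_scal (/ d) (vs_scal (/ 2) (vs_add x y))) in h by vsolve (x :: y :: nil).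
  rewrite (norm_scal Hn), Rabs_right in h
    by (try lra; apply (subspace_scal HS), (subspace_add HS); auto).
  apply Rmult_lt_reg_l with (/ d); auto. rewrite Rinv_l by lra. exact h.
Qed.

Theorem nearest_point_unique C m a b : is_strictly_convex E S n -> convex_set C ->
  (forall w, C w -> S w) -> S m -> C a -> C b ->
  (forall w, C w -> n (vs_sub m a) <= n (vs_sub m w)) -> n (vs_sub m b) = n (vs_sub m a) -> a = b.
Proof.
intros Hsc HCc HCS Hm Ca Cb Hmin Hab. apply NNPP. intro Hne.
assert (Sa : S a) by auto. assert (Sb : S b) by auto.
assert (Hne' : vs_sub m a <> vs_sub m b).
{ intro h. apply Hne.
  replace a with (vs_sub m (vs_sub m a)) by vsolve (m :: a :: nil).
  rewrite h. vsolve (m :: b :: nil). }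
pose proof (strictly_convex_midpoint_lt _ _ _ Hsc (subspace_sub HS m a Hm Sa)
              (subspace_sub HS m b Hm Sb) eq_refl Hab Hne') as Hlt.
pose proof (Hmin _ (HCc a b (/ 2) Ca Cb ltac:(lra))) as Hge.
replace (vs_sub m (vs_add (vs_scal (/ 2) a) (vs_scal (1 - / 2) b)))
  with (vs_scal (/ 2) (vs_add (vs_sub m a) (vs_sub m b))) in Hge
  by vsolveT (m :: a :: b :: nil) ltac:(field).
lra.
Qed.

End NearestPoint.

Section OrderedSpace.
Context {E : VecSpace} {S : E -> Prop} (HS : is_subspace E S)
  (le : E -> E -> Prop) (Hle : linear_preorder E le).

Lemma le_add2 a b c d : le a c -> le b d -> le (vs_add a b) (vs_add c d).
Proof.
intros Hac Hbd. destruct Hle as [_ [Htrans [Hadd _]]].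
apply Htrans with (vs_add a d); auto.
rewrite (vs_addC _ a d), (vs_addC _ c d). auto.
Qed.

Lemma le_convex_comb a b a' b' l : le a a' -> le b b' -> 0 <= l <= 1 ->
  le (vs_add (vs_scal l a) (vs_scal (1 - l) b)) (vs_add (vs_scal l a') (vs_scal (1 - l) b')).
Proof.
intros Ha Hb Hl. destruct Hle as [_ [_ [_ Hscal]]].
apply le_add2; apply Hscal; auto; lra.
Qed.

Lemma le_opp a b : le a b -> le (vs_opp b) (vs_opp a).
Proof.
intro Hab. destruct Hle as [_ [_ [Hadd _]]].
pose proof (Hadd (vs_add (vs_opp a) (vs_opp b)) a b Hab) as h.
replace (vs_add (vs_add (vs_opp a) (vs_opp b)) a) with (vs_opp b) in h by vsolve (a :: b :: nil).
replace (vs_add (vs_add (vs_opp a) (vs_opp b)) b) with (vs_opp a) in h by vsolve (a :: b :: nil).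
exact h.
Qed.

Lemma Omega'_0 psi1 psi2 : Bplus E S le psi1 -> Bplus E S le psi2 ->
  Omega' E S le psi1 psi2 vs_zero.
Proof.
intros [H1 _] [H2 _]. split; [apply (subspace_0 HS)|]. split; auto. apply Hle.
Qed.

Lemma Omega'_convex psi1 psi2 : convex_set (Omega' E S le psi1 psi2).
Proof.
intros a b l [Sa [Za [Pa Qa]]] [Sb [Zb [Pb Qb]]] Hl.
assert (Hcomb : forall psi : E, vs_add (vs_scal l psi) (vs_scal (1 - l) psi) = psi)
  by (intro psi; vsolve (psi :: nil)).
split; [apply (subspace_comb HS); auto|split; [|split]].
- rewrite <- (Hcomb vs_zero). apply le_convex_comb; auto.
- rewrite <- (Hcomb psi1). apply le_convex_comb; auto.
- rewrite <- (Hcomb psi2). apply le_convex_comb; auto.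
Qed.

(* The closedness axiom only concerns upper bounds; the lower bound [0 <= v] is obtained from
   [- v <= 0]. *)
Lemma Omega'_closed (n : E -> R) psi1 psi2 : is_norm_on E S n ->
  (forall (uk : nat -> E) u psi, (forall k, S (uk k)) -> (forall k, le (uk k) psi) ->
     S u -> converges E n uk u -> le u psi) ->
  seq_closed E S n (Omega' E S le psi1 psi2).
Proof.
intros Hn Hclos w v Hw Hv Hconv. split; [auto|split; [|split]].
- assert (h : le (vs_opp v) vs_zero).
  { apply (Hclos (fun j => vs_opp (w j))).
    - intro j. apply (subspace_opp HS), Hw.
    - intro j. pose proof (le_opp _ _ (proj1 (proj2 (Hw j)))) as h.
      replace (@vs_opp E vs_zero) with (@vs_zero E) in h by vsolve (@nil E). exact h.
    - apply (subspace_opp HS); auto.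
    - intros eps Heps. destruct (Hconv eps Heps) as [N HN]. exists N. intros k Hk.
      replace (vs_sub (vs_opp (w k)) (vs_opp v)) with (vs_opp (vs_sub (w k) v))
        by vsolve (w k :: v :: nil).
      rewrite (norm_opp Hn) by (apply (subspace_sub HS); auto; apply Hw). auto. }
  pose proof (le_opp _ _ h) as h'.
  replace (@vs_opp E vs_zero) with (@vs_zero E) in h' by vsolve (@nil E).
  replace (vs_opp (vs_opp v)) with v in h' by vsolve (v :: nil). exact h'.
- apply (Hclos w); auto; intro j; apply Hw.
- apply (Hclos w); auto; intro j; apply Hw.
Qed.

End OrderedSpace.

Theorem mainTheorem16
  (Vt Wt : VecSpace) (inV : Vt -> Prop) (nV : Vt -> R)
  (inW : Wt -> Prop) (nW : Wt -> R) (Rel : Vt -> Wt -> Prop)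
  (le : Vt -> Vt -> Prop)
  (HU : ordered_gradient_space Vt Wt inV nV inW nW Rel le)
  (psi1 psi2 : Vt)
  (H1 : Bplus Vt inV le psi1) (H2 : Bplus Vt inV le psi2)
  (m : Vt) (Hm : is_max Vt inV nV le psi1 psi2 m) :
  exists! u, Omega' Vt inV le psi1 psi2 u /\
    is_inf (fun r => exists v, Omega' Vt inV le psi1 psi2 v /\ r = nV (vs_sub m v))
           (nV (vs_sub m u)).
Proof.
destruct HU as [[[_ [_ [[HS [Hn _]] [Hrefl _]]]] [Hle Hclos]] [Hsc _]].
destruct Hm as [[Hm _] _].
set (C := Omega' Vt inV le psi1 psi2).
assert (HCS : forall w, C w -> inV w) by (intros w Hw; apply Hw).
assert (HCc : convex_set C) by apply (Omega'_convex HS le Hle).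
destruct (nearest_point_exists HS Hn C m Hrefl HCc (Omega'_closed HS le Hle nV psi1 psi2 Hn Hclos)
            HCS (ex_intro _ _ (Omega'_0 HS le Hle psi1 psi2 H1 H2)) Hm) as [u [Cu Hu]].
exists u. split; [split; auto|].
intros w [Cw Hw]. apply (nearest_point_unique HS Hn C m u w); auto.
- intros v Cv. apply (is_inf_lb _ _ _ Hu). exists v; auto.
- apply (is_inf_unique _ _ _ Hw Hu).
Qed.
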